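(* Let $H$ be obtained from a graph $G$ on vertices $v_1,\dots,v_k$ by expanding each $v_i$ by the graph $M_i=(V_i,E_i)$. Let $\Omega$ be a potential maximal clique of $H$, and suppose some $V_i$ intersects $\Omega$ but is not contained in $\Omega$. Then $\Omega\cap V_i$ is a potential maximal clique of $M_i$ and $\Omega\setminus V_i=N_H(V_i)$.
   Context: Expansion: given a graph $G$ on vertices $v_1,\dots,v_k$ and pairwise disjoint graphs $M_i=(V_i,E_i)$, the graph $H$ obtained by expanding each $v_i$ by $M_i$ has vertex set $V_1\cup\dots\cup V_k$ and edge set $E_1\cup\dots\cup E_k\cup\{ab \mid a\in V_i, b\in V_j, v_iv_j\in E(G)\}$. $N_H(X)$ denotes the set of vertices outside $X$ adjacent in $H$ to some vertex of $X$. A graph is chordal if every cycle of length at least 4 has a chord; a minimal triangulation of a graph $F$ is a chordal supergraph on the same vertex set such that no proper subset of its edge set containing $E(F)$ gives a chordal graph. A potential maximal clique of $F$ is a vertex set that is a maximal clique of some minimal triangulation of $F$. *)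

(* Finite simple graphs on a subset A of a finType T,
   with edges represented as 2-element subsets of A. *)
From mathcomp Require Import all_boot.
Set Implicit Arguments. Unset Strict Implicit. Unset Printing Implicit Defensive.

Section Graphs.
Variable T : finType.

Definition wf_graph (A : {set T}) (E : {set {set T}}) : Prop :=
  forall e, e \in E -> #|e| = 2 /\ e \subset A.

Definition adj (E : {set {set T}}) : rel T :=
  fun x y => (x != y) && ([set x; y] \in E).

Definition is_clique (A : {set T}) (E : {set {set T}}) (K : {set T}) : Prop :=
  K \subset A /\ (forall x y, x \in K -> y \in K -> x != y -> [set x; y] \in E).

Definition maximal_clique (A : {set T}) (E : {set {set T}}) (K : {set T}) : Prop :=
  is_clique A E K /\ (forall K' : {set T}, is_clique A E K' -> K \subset K' -> K' = K).

Definition chordal (A : {set T}) (E : {set {set T}}) : Prop :=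
  forall s : seq T, uniq s -> 4 <= size s -> {subset s <= A} ->
    cycle (adj E) s ->
    exists x y, [/\ x \in s, y \in s, adj E x y, y != next s x & x != next s y].

Definition minimal_triangulation (A : {set T}) (E F : {set {set T}}) : Prop :=
  [/\ wf_graph A F, E \subset F, chordal A F &
      forall F' : {set {set T}}, E \subset F' -> F' \subset F -> chordal A F' -> F' = F].

Definition potential_maximal_clique (A : {set T}) (E : {set {set T}})
  (Om : {set T}) : Prop :=
  exists F, minimal_triangulation A E F /\ maximal_clique A F Om.

Definition nbh (A : {set T}) (E : {set {set T}}) (X : {set T}) : {set T} :=
  [set y in A :\: X | [exists x in X, adj E x y]].

(* Expansion of G = ('I_k, EG) by graphs M_i = (V i, EM i). *)
Definition expansion_vertices (k : nat) (V : 'I_k -> {set T}) : {set T} :=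
  \bigcup_(i < k) V i.

Definition expansion_edges (k : nat) (EG : {set {set 'I_k}})
  (V : 'I_k -> {set T}) (EM : 'I_k -> {set {set T}}) : {set {set T}} :=
  (\bigcup_(i < k) EM i) :|:
  [set e : {set T} | [exists a : T, exists b : T, exists i : 'I_k, exists j : 'I_k,
        [&& e == [set a; b], a \in V i, b \in V j & [set i; j] \in EG]]].

End Graphs.

From mathcomp Require Import all_boot.
From Stdlib Require Import Classical Lia.
From mathcomp Require Import zify.
Set Implicit Arguments. Unset Strict Implicit. Unset Printing Implicit Defensive.

(* V := V_i is a module of H: every vertex outside V adjacent to V is adjacent
   to all of V. Fix a minimal triangulation F of H having Om as a maximal clique.
   First, V is not a clique of F: otherwise deleting the F-edges from V to the
   vertices not complete to V would keep F chordal (by the fan lemma for chordless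
   paths), so by minimality every F-neighbour of V would be complete to V, and a
   vertex of V outside Om could be added to Om. Two non-adjacent vertices of V
   then close a 4-cycle with any two vertices of N(V), whose only possible chord
   makes N(V) a clique of F. Hence deleting the F-edges from V to vertices outside
   V and N(V) keeps F chordal, so there are none; this gives Om \ V = N(V).
   Finally, any chordal graph between M_i and F[V] can replace F[V] inside F
   without destroying chordality, so F[V] is a minimal triangulation of M_i, and
   Om meets V in one of its maximal cliques. *)

Section Cycles.
Variable T : finType.
Implicit Types (A V N : {set T}) (E F G : {set {set T}}) (s : seq T).

Definition has_chord E s :=
  exists x y, [/\ x \in s, y \in s, adj E x y, y != next s x & x != next s y].

Definition chordless_cycle E s :=
  forall x y, x \in s -> y \in s -> adj E x y -> y = next s x \/ x = next s y.

Definition chordless_path E s := forall s1 x s2 y s3,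
  s = s1 ++ x :: s2 ++ y :: s3 -> s2 != [::] -> ~~ adj E x y.

Lemma adjC E x y : adj E x y = adj E y x.
Proof. by rewrite /adj /= eq_sym setUC. Qed.

Lemma adj_subset E F x y : E \subset F -> adj E x y -> adj F x y.
Proof. by move=> sEF /andP[xy /(subsetP sEF) xyF]; rewrite /adj /= xy xyF. Qed.

Lemma adj_neq E x y : adj E x y -> x != y.
Proof. by case/andP. Qed.

Lemma next_consecutive s1 x y s2 :
  uniq (s1 ++ x :: y :: s2) -> next (s1 ++ x :: y :: s2) x = y.
Proof.
move=> /cycle_next; case: s1 => [|z s1] /=; first by case/andP=> /eqP.
by rewrite rcons_cat cat_path /= => /and4P[_ _ /eqP].
Qed.

Lemma next_last x s : uniq (x :: s) -> next (x :: s) (last x s) = x.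
Proof. by move=> /cycle_next /=; rewrite rcons_path => /andP[_ /eqP]. Qed.

Lemma cycle_consE (e : rel T) x s : cycle e (x :: s) = path e x s && e (last x s) x.
Proof. by rewrite /= rcons_path. Qed.

Lemma has_chord_rot E n s : uniq s -> has_chord E (rot n s) -> has_chord E s.
Proof.
move=> Us [x [y [xs ys xy nx ny]]]; exists x, y.
by rewrite !mem_rot !(next_rot n Us) in xs ys nx ny.
Qed.

Lemma no_chord_chordless E s : ~ has_chord E s -> chordless_cycle E s.
Proof.
move=> noch x y xs ys xy; apply: NNPP => cons; apply: noch; exists x, y.
by split=> //; apply/eqP => e; apply: cons; [left|right].
Qed.

Lemma chordless_path_catl E s r : chordless_path E (s ++ r) -> chordless_path E s.
Proof.
by move=> cl s1 x s2 y s3 Es; apply: (cl s1 x s2 y (s3 ++ r)); rewrite Es -catA /= -catA.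
Qed.

Lemma chordless_path_catr E s r : chordless_path E (r ++ s) -> chordless_path E s.
Proof. by move=> cl s1 x s2 y s3 Es; apply: (cl (r ++ s1)); rewrite Es -catA. Qed.

Lemma chordless_path_sub E F s :
  {in s &, forall x y, adj F x y -> adj E x y} ->
  chordless_path E s -> chordless_path F s.
Proof.
move=> sFE cl s1 x s2 y s3 Es ne; apply: contraNN (cl _ _ _ _ _ Es ne); apply: sFE;
  by rewrite Es !(mem_cat, inE) eqxx ?orbT.
Qed.

Lemma uniq_cat_cons s1 x s2 : uniq (s1 ++ x :: s2) -> x \notin s2.
Proof. by rewrite cat_uniq /= => /and4P[]. Qed.

Lemma chordless_cycle_behead E x s :
  uniq (x :: s) -> chordless_cycle E (x :: s) -> chordless_path E s.
Proof.
move=> Us cl s1 a [//|b s2] c s3 Es _; apply/negP => ac.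
have Ex : x :: s = (x :: s1) ++ a :: b :: (s2 ++ c :: s3) by rewrite Es.
have as0 : a \in s by rewrite Es mem_cat inE eqxx orbT.
have cs0 : c \in s by rewrite Es !(mem_cat, inE) eqxx !orbT.
have inS z : z \in s -> z \in x :: s by rewrite inE orbC => ->.
have [nac|nca] := cl a c (inS _ as0) (inS _ cs0) ac.
  move: nac; rewrite Ex next_consecutive -?Ex // => cb.
  have Ub : uniq ((x :: s1 ++ [:: a]) ++ b :: (s2 ++ c :: s3)).
    by move: Us; rewrite Ex /= -catA.
  by have := uniq_cat_cons Ub; rewrite -cb mem_cat inE eqxx orbT.
have Ua : uniq ((x :: s1) ++ a :: (b :: s2 ++ c :: s3)) by rewrite -Ex.
case: s3 Es Ex Ua nca => [|d s3] Es Ex Ua.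
  have -> : c = last x s by rewrite Es last_cat /= last_cat.
  by rewrite next_last // => ax; move: Us; rewrite /= -ax as0.
have Ed : x :: s = (x :: s1 ++ a :: b :: s2) ++ c :: d :: s3 by rewrite Ex /= -catA.
rewrite Ed next_consecutive -?Ed // => ad.
by have := uniq_cat_cons Ua; rewrite ad !(mem_cat, inE) eqxx !orbT.
Qed.

Lemma split_pair s x y : x \in s -> y \in s -> x != y ->
  exists s1 s2 s3, s = s1 ++ x :: s2 ++ y :: s3 \/ s = s1 ++ y :: s2 ++ x :: s3.
Proof.
move=> /splitPr[p1 p2]; rewrite mem_cat inE => /orP[/splitPr[q1 q2]|/orP[/eqP->|/splitPr[q1 q2]]].
- by exists q1, q2, p2; right; rewrite -catA.
- by rewrite eqxx.
- by exists p1, q1, q2; left.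
Qed.

Lemma chordless_path_next E v s x y : uniq (v :: s) -> chordless_path E s ->
  x \in s -> y \in s -> adj E x y -> y = next (v :: s) x \/ x = next (v :: s) y.
Proof.
move=> Us cl xs ys xy.
have consec a b s1 s2 s3 : s = s1 ++ a :: s2 ++ b :: s3 -> adj E a b -> b = next (v :: s) a.
  case: s2 => [|d s2] Es ab; last by move: (cl _ _ _ _ _ Es isT); rewrite ab.
  by move: Us; rewrite Es -cat_cons => Us; rewrite next_consecutive.
have [s1 [s2 [s3 [Es|Es]]]] := split_pair xs ys (adj_neq xy).
  by left; apply: consec Es xy.
by right; apply: consec Es _; rewrite adjC.
Qed.

Lemma mem_behead_last c s y : y \in s -> y != last c s ->
  exists s1 s2, s = s1 ++ y :: s2 /\ s2 != [::].
Proof.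
case/splitPr=> s1 s2; rewrite last_cat /= => ylast; exists s1, s2; split=> //.
by case: s2 ylast => //=; rewrite eqxx.
Qed.

Lemma has_chord_apex E v c s : uniq (v :: c :: s) -> chordless_path E (c :: s) ->
  has_chord E (v :: c :: s) ->
  exists s1 w s2, [/\ s = s1 ++ w :: s2, s2 != [::] & adj E v w].
Proof.
move=> Us cl [x [y [xs ys xy nx ny]]].
have nv : next (v :: c :: s) v = c by rewrite (next_consecutive (s1 := [::])).
have nl : next (v :: c :: s) (last c s) = v by rewrite (next_last Us).
wlog xv : x y xs ys xy nx ny / x = v.
  move=> wl; have := ys; have := xs; rewrite [x \in _]in_cons [y \in _]in_cons.
  case/orP=> [/eqP xv|xs'] /orP[/eqP yv|ys'].
  - by move: (adj_neq xy); rewrite xv yv eqxx.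
  - exact: wl xs ys xy nx ny xv.
  - by apply: (wl y x) => //; rewrite adjC.
  - have [] := chordless_path_next Us cl xs' ys' xy => e.
      by move: nx; rewrite e eqxx.
    by move: ny; rewrite e eqxx.
subst x; rewrite nv in nx; move: ys; rewrite !inE (negbTE nx) /= => /orP[/eqP yv|ys].
  by move: (adj_neq xy); rewrite yv eqxx.
have ylast : y != last c s by apply: contraNneq ny => ->; rewrite nl.
have [s1 [s2 [Es ne]]] := mem_behead_last ys ylast.
by exists s1, y, s2.
Qed.

Lemma chordal_fan A F v c s : chordal A F ->
  uniq (v :: c :: s) -> {subset v :: c :: s <= A} ->
  path (adj F) c s -> chordless_path F (c :: s) ->
  adj F v c -> adj F v (last c s) -> {in c :: s, forall w, adj F v w}.
Proof.
move=> chF; have [n] := ubnP (size s); elim: n c s => // n IH c s.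
rewrite ltnS => sz Us sA pth cl vc vl w.
case: s => [|d [|e s']] in sz Us sA pth cl vl *.
- by rewrite inE => /eqP->.
- by rewrite !inE => /orP[]/eqP->.
have long : 2 <= size (d :: e :: s') by [].
move: (d :: e :: s') long sz Us sA pth cl vl => {d e s'} s long sz Us sA pth cl vl.
have cyc : cycle (adj F) (v :: c :: s).
  by rewrite [cycle _ _]/= rcons_path vc pth adjC vl.
have [s1 [u [[|h s2] [Es // _ vu]]]] :=
  has_chord_apex Us cl (chF _ Us long sA cyc).
have Epre : v :: c :: s = (v :: c :: s1 ++ [:: u]) ++ h :: s2 by rewrite Es /= -catA.
have Esuf : v :: c :: s = (v :: c :: s1) ++ u :: h :: s2 by rewrite Es.
have sz_s : size s = size s1 + (size s2).+2 by rewrite Es size_cat.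
have sub_pre : subseq (v :: c :: s1 ++ [:: u]) (v :: c :: s).
  by rewrite Epre prefix_subseq.
have sub_suf : subseq (v :: u :: h :: s2) (v :: c :: s).
  by rewrite Esuf; apply: (@cat_subseq _ [:: v] _ [:: v]) => //; apply: (suffix_subseq (c :: s1)).
have Ecs : c :: s = (c :: s1 ++ [:: u]) ++ h :: s2 by rewrite Es /= -catA.
have [pth1 pth2] : path (adj F) c (s1 ++ [:: u]) /\ path (adj F) u (h :: s2).
  by move: pth; rewrite (_ : s = (s1 ++ [:: u]) ++ h :: s2) ?cat_path ?last_cat;
    [case/andP | case: Ecs].
rewrite Ecs mem_cat => /orP[wpre|wsuf].
  apply: (IH c (s1 ++ [:: u])) => //.
  - by rewrite size_cat /=; lia.
  - exact: subseq_uniq sub_pre Us.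
  - by move=> z /(mem_subseq sub_pre) /sA.
  - by apply: (chordless_path_catl (r := h :: s2)); rewrite -Ecs.
  - by rewrite last_cat.
apply: (IH u (h :: s2)) => //.
- by rewrite /=; lia.
- exact: subseq_uniq sub_suf Us.
- by move=> z /(mem_subseq sub_suf) /sA.
- by apply: (chordless_path_catr (r := c :: s1)); rewrite /= -Es.
- by rewrite Es last_cat in vl.
- by rewrite inE wsuf orbT.
Qed.

Definition chordal_on A G (P : pred T) := forall s, uniq s -> 4 <= size s ->
  {subset s <= A} -> cycle (adj G) s -> {subset s <= P} -> has_chord G s.

Lemma chordal_on_subgraph A F G (P : pred T) : chordal A F -> G \subset F ->
  {in P &, forall x y, adj F x y -> adj G x y} -> chordal_on A G P.
Proof.
move=> chF sGF sFG s Us sz sA cyc sP.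
have cycF : cycle (adj F) s by apply: sub_cycle cyc => x y; apply: adj_subset.
have [x [y [xs ys xy nx ny]]] := chF s Us sz sA cycF.
by exists x, y; split=> //; apply: sFG => //; apply: sP.
Qed.

Lemma fpath_closed (f : T -> T) (P : pred T) x t :
  fpath f x t -> P x -> {in x :: t, forall z, P z -> P (f z)} -> all P t.
Proof.
elim: t x => [|y t IH] x //= /andP[/eqP fxy pth] Px closed.
have Py : P y by rewrite -fxy; apply: closed; rewrite ?mem_head.
by rewrite Py; apply: (IH y) => // z zt; apply: closed; rewrite inE zt orbT.
Qed.

Lemma exists_next_out V s x y : uniq s ->
  x \in s -> x \in V -> y \in s -> y \notin V ->
  exists2 z, z \in s & (z \in V) && (next s z \notin V).
Proof.
move=> Us xs xV ys yV; apply/hasP; apply: contraNT yV => /hasPn closed.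
case/rot_to: xs => i t Et.
have Ur : uniq (x :: t) by rewrite -Et rot_uniq.
have pth : fpath (next (x :: t)) x t by have := cycle_next Ur; rewrite /= rcons_path => /andP[].
have /allP tV : all (fun z => z \in V) t.
  apply: (fpath_closed pth) => // z; rewrite -Et mem_rot next_rot // => zs zV.
  by apply: contraR (closed z zs) => nzV; rewrite zV.
by move: ys; rewrite -(mem_rot i) Et inE => /orP[/eqP->|/tV].
Qed.

(* A cycle leaving V along z q has q in N, and q is adjacent to the
   predecessor of z, which lies in V or N. *)
Lemma chordal_glue A G V N :
  {in V & [predC V], forall x y, adj G x y -> y \in N} ->
  {in V & N, forall x y, adj G x y} ->
  {in N &, forall x y, x != y -> adj G x y} ->
  chordal_on A G (mem V) -> chordal_on A G [predC V] -> chordal A G.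
Proof.
move=> VNout VN Ncl chV chO s Us sz sA cyc.
have [/allP sV|] := boolP (all (mem V) s); first exact: chV.
have [/allP sO _|] := boolP (all [predC V] s); first exact: chO.
case/allPn=> x xs /negPn xV /allPn[y ys yV].
have [z zs /andP[zV nzV]] := exists_next_out Us xs xV ys yV.
case/rot_to: zs => i t Et; apply: (has_chord_rot (n := i)) => //.
have Ur : uniq (z :: t) by rewrite -Et rot_uniq.
have cycr : cycle (adj G) (z :: t) by rewrite -Et rot_cycle.
have szr : 4 <= size (z :: t) by rewrite -Et size_rot.
rewrite -(next_rot i Us) Et in nzV; rewrite Et.
case: t Ur cycr szr nzV {Et} => [|q [|c [|d t]]] // Ur cycr szr nzV.
have nz : next (z :: q :: c :: d :: t) z = q by rewrite (next_consecutive (s1 := [::])).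
have nq : next (z :: q :: c :: d :: t) q = c by rewrite (next_consecutive (s1 := [:: z])).
have np : next (z :: q :: c :: d :: t) (last d t) = z by rewrite (next_last Ur).
rewrite nz in nzV.
have qN : q \in N by apply: (VNout z) => //; rewrite -nz; apply: next_cycle cycr (mem_head _ _).
have pd : last d t \in d :: t by apply: mem_last.
have pz : adj G (last d t) z.
  by rewrite -[in X in adj _ _ X]np; apply: next_cycle cycr _; rewrite 3!in_cons pd !orbT.
have /and4P[zt qt ct _] := Ur.
exists q, (last d t); split.
- by rewrite !inE eqxx orbT.
- by rewrite 3!in_cons pd !orbT.
- have [pV|pV] := boolP (last d t \in V); first by rewrite adjC; apply: VN.
  apply: Ncl; rewrite //; first by apply: (VNout z); rewrite // adjC.
  by apply: contraNneq qt => ->; rewrite in_cons pd orbT.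
- by rewrite nq; apply: contraNneq ct => <-.
- by rewrite np; apply: contraNneq zt => ->; rewrite mem_head.
Qed.

Lemma chordal_square A F a b c d : chordal A F ->
  uniq [:: a; b; c; d] -> {subset [:: a; b; c; d] <= A} ->
  cycle (adj F) [:: a; b; c; d] -> ~~ adj F a c -> adj F b d.
Proof.
move=> chF Us sA cyc nac; have [x [y [xs ys xy nx ny]]] := chF _ Us isT sA cyc.
have na : next [:: a; b; c; d] a = b by rewrite (next_consecutive (s1 := [::])).
have nb : next [:: a; b; c; d] b = c by rewrite (next_consecutive (s1 := [:: a])).
have nc : next [:: a; b; c; d] c = d by rewrite (next_consecutive (s1 := [:: a; b])).
have nd : next [:: a; b; c; d] d = a by rewrite (next_last Us).
move: xs ys nx ny xy (adj_neq xy); rewrite !inE.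
move=> /or4P[]/eqP-> /or4P[]/eqP-> nx ny xy xy';
  rewrite ?na ?nb ?nc ?nd ?eqxx // in nx ny xy';
  by [rewrite adjC | move: nac; rewrite ?xy // adjC xy].
Qed.

Lemma chordless_cycle_nbr E x c s w : uniq (x :: c :: s) ->
  chordless_cycle E (x :: c :: s) -> w \in c :: s -> adj E x w -> w = c \/ w = last c s.
Proof.
move=> Us cl ws xw; have wxs : w \in x :: c :: s by rewrite in_cons ws orbT.
have [->|] := cl x w (mem_head _ _) wxs xw.
  by left; rewrite (next_consecutive (s1 := [::])).
by move=> xw'; right; apply: (can_inj (prev_next Us)); rewrite -xw' next_last.
Qed.

Lemma chordless_cycle_ends E x c d e s : uniq (x :: c :: d :: e :: s) ->
  chordless_cycle E (x :: c :: d :: e :: s) -> ~~ adj E c (last e s).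
Proof.
move=> Us cl; apply/negP => cl_adj.
have cs : c \in x :: c :: d :: e :: s by rewrite !inE eqxx orbT.
have ls : last e s \in x :: c :: d :: e :: s by rewrite 3!in_cons mem_last !orbT.
have /and3P[xn _ dn] : [&& x \notin c :: d :: e :: s, c \notin d :: e :: s & d \notin e :: s].
  by move: Us => /= /and4P[-> -> -> _].
case: (cl _ _ cs ls cl_adj).
  by rewrite (next_consecutive (s1 := [:: x])) // => ld; move: dn; rewrite -ld mem_last.
by rewrite (next_last Us) => cx; move: xn; rewrite cx mem_head.
Qed.

End Cycles.

Section CrossEdges.
Variables (T : finType) (A : {set T}) (E F : {set {set T}}) (V R : {set T}).

Definition cross_edges := [set e in F | [exists x in V, exists r in R, e == [set x; r]]].

Lemma adj_cross_edges a b : adj (F :\: cross_edges) a b =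
  adj F a b && ~~ [|| (a \in V) && (b \in R) | (b \in V) && (a \in R)].
Proof.
rewrite /adj /= in_setD inE; case: (boolP (a != b)) => //= ab.
case: ([set a; b] \in F); rewrite ?andbF //= andbT; congr (~~ _); apply/idP/idP.
  case/exists_inP=> x xV /exists_inP[r rR /eqP eab].
  have xab : x \in [set a; b] by rewrite eab set21.
  have rab : r \in [set a; b] by rewrite eab set22.
  have ne c : [set a; b] != [set c; c].
    by rewrite setUid eq_sym eqEcard cards1 cards2 ab andbF.
  case/set2P: xab eab xV => -> eab xV; case/set2P: rab eab rR => -> eab rR;
    rewrite ?xV ?rR ?orbT //; [move: (ne a) | move: (ne b)]; by rewrite eab eqxx.
case/orP=> /andP[xV rR]; apply/exists_inP.
  by exists a => //; apply/exists_inP; exists b.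
by exists b => //; apply/exists_inP; exists a; rewrite // setUC.
Qed.

Lemma subset_setD_cross_edges : E \subset F ->
  {in V & R, forall x r, [set x; r] \notin E} -> E \subset F :\: cross_edges.
Proof.
move=> sEF noE; apply/subsetP => e eE; rewrite in_setD (subsetP sEF _ eE) andbT inE.
apply/negP => /andP[_ /exists_inP[x xV /exists_inP[r rR /eqP exr]]].
by move: eE; rewrite exr; apply/negP; apply: noE.
Qed.

Lemma minimal_triangulation_cross_edges : minimal_triangulation A E F ->
  {in V & R, forall x r, [set x; r] \notin E} -> chordal A (F :\: cross_edges) ->
  {in V & R, forall x r, ~~ adj F x r}.
Proof.
move=> [_ sEF _ minF] noE chG x r xV rR.
have GF := minF _ (subset_setD_cross_edges sEF noE) (subsetDl _ _) chG.
by apply/negP => xr; move: (adj_cross_edges x r); rewrite GF xr xV rR.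
Qed.

End CrossEdges.

Section CliqueNeighbours.
Variables (T : finType) (A : {set T}) (E F : {set {set T}}) (V : {set T}).
Hypotheses (triF : minimal_triangulation A E F) (Vclique : is_clique A F V).

Definition complete_to (r : T) := [forall v in V, adj F v r].

Let partial := [set r | (r \notin V) && ~~ complete_to r].
Let G := F :\: cross_edges F V partial.

Lemma complete_toP r v : complete_to r -> v \in V -> adj F v r.
Proof. by move/forall_inP; apply. Qed.

Lemma adj_drop_clique a b : a \in V -> b \in V -> a != b -> adj G a b.
Proof. by move=> aV bV ab; rewrite adj_cross_edges !inE aV bV /adj /= ab Vclique.2. Qed.

Lemma adj_drop_complete a b : a \in V -> b \notin V -> complete_to b -> adj G a b.
Proof. by move=> aV bV cb; rewrite adj_cross_edges !inE aV (negbTE bV) cb complete_toP. Qed.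

Lemma adj_drop_outside a b : a \notin V -> b \notin V -> adj F a b -> adj G a b.
Proof. by move=> aV bV ab; rewrite adj_cross_edges (negbTE aV) (negbTE bV) ab. Qed.

Lemma complete_to_drop_nbr a w : a \in V -> w \notin V -> adj G a w -> complete_to w.
Proof. by move=> aV wV; rewrite adj_cross_edges !inE aV wV /= andbF orbF negbK => /andP[]. Qed.

Section ChordlessCycle.
Variables (x0 c d e : T) (t : seq T).
Local Notation C := (x0 :: c :: d :: e :: t).
Hypotheses (x0V : x0 \in V) (UC : uniq C) (cycC : cycle (adj G) C)
  (clC : chordless_cycle G C).

Lemma chordless_cycle_avoids_clique : {in c :: d :: e :: t, forall w, w \notin V}.
Proof.
have x0c : adj G x0 c by case/andP: cycC.
have px0 : adj G (last e t) x0 by move: cycC; rewrite cycle_consE => /andP[].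
have ends : ~~ adj G c (last e t) := chordless_cycle_ends UC clC.
have /andP[x0n /andP[cn _]] := UC.
have cV : c \notin V.
  apply: contraNN ends => cV; have [pV|pV] := boolP (last e t \in V).
    by apply: adj_drop_clique => //; apply: contraNneq cn => ->; rewrite in_cons mem_last orbT.
  by apply: adj_drop_complete => //; apply: complete_to_drop_nbr x0V pV _; rewrite adjC.
have pV : last e t \notin V.
  apply: contraNN ends => pV; rewrite adjC.
  by apply: adj_drop_complete => //; apply: complete_to_drop_nbr x0V cV x0c.
move=> w ws; apply/negP => wV.
have x0w : x0 != w by apply: contraNneq x0n => ->.
case: (chordless_cycle_nbr UC clC ws (adj_drop_clique x0V wV x0w)) => ew;
  rewrite ew in wV; [exact: negP cV wV | exact: negP pV wV].
Qed.

Lemma chordless_cycle_complete : {subset C <= A} ->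
  {in c :: d :: e :: t, forall w, complete_to w}.
Proof.
move=> sA w wP; have [_ _ chF _] := triF.
have noV := chordless_cycle_avoids_clique.
have [pthG px0] : path (adj G) x0 (c :: d :: e :: t) /\ adj G (last e t) x0.
  by apply/andP; rewrite -cycle_consE.
have cP : c \in c :: d :: e :: t := mem_head _ _.
have pP : last e t \in c :: d :: e :: t by rewrite 2!in_cons mem_last !orbT.
have cc : complete_to c by apply: complete_to_drop_nbr x0V (noV _ cP) _; case/andP: pthG.
have cp : complete_to (last e t).
  by apply: complete_to_drop_nbr x0V (noV _ pP) _; rewrite adjC.
apply/forall_inP => v vV.
have clF : chordless_path F (c :: d :: e :: t).
  apply: chordless_path_sub (chordless_cycle_behead UC clC) => a b aP bP.
  exact: adj_drop_outside (noV _ aP) (noV _ bP).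
have pthF : path (adj F) c (d :: e :: t).
  have : path (adj F) x0 (c :: d :: e :: t).
    by apply: sub_path pthG => a b; apply/adj_subset/subsetDl.
  by case/andP.
have Uv : uniq (v :: c :: d :: e :: t).
  have vP : v \notin c :: d :: e :: t by apply/negP => /noV; rewrite vV.
  by rewrite cons_uniq vP; case/andP: UC.
have sAv : {subset v :: c :: d :: e :: t <= A}.
  move=> z; rewrite in_cons => /orP[/eqP->|zP]; first exact: (subsetP Vclique.1).
  by apply: sA; rewrite in_cons zP orbT.
exact: chordal_fan chF Uv sAv pthF clF (complete_toP cc vV) (complete_toP cp vV) _ wP.
Qed.

End ChordlessCycle.

Lemma chordal_drop_partial : chordal A G.
Proof.
move=> s Us sz sA cyc; apply: NNPP => noch; have [_ _ chF _] := triF.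
have cycF : cycle (adj F) s by apply: sub_cycle cyc => a b; apply/adj_subset/subsetDl.
have [x [y [xs ys xy nx ny]]] := chF s Us sz sA cycF.
have [x0 [r [x0s rs x0V rV nr]]] :
    exists x0 r, [/\ x0 \in s, r \in s, x0 \in V, r \notin V & ~~ complete_to r].
  have : ~~ adj G x y by apply/negP => xyG; apply: noch; exists x, y.
  rewrite adj_cross_edges xy negbK !inE => /orP[]/and3P[? ? ?];
    [exists x, y | exists y, x]; by split.
case/rot_to: x0s => i t Et.
have noch' : ~ has_chord G (x0 :: t) by rewrite -Et => /(has_chord_rot Us).
have Ut : uniq (x0 :: t) by rewrite -Et rot_uniq.
have cyct : cycle (adj G) (x0 :: t) by rewrite -Et rot_cycle.
have sAt : {subset x0 :: t <= A} by move=> z; rewrite -Et mem_rot; apply: sA.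
have rt : r \in x0 :: t by rewrite -Et mem_rot.
have szt : 4 <= size (x0 :: t) by rewrite -Et size_rot.
case: t Et noch' Ut cyct szt sAt rt => [|c [|d [|e t]]] // _ noch' Ut cyct _ sAt rt.
have rP : r \in c :: d :: e :: t.
  by move: rt; rewrite in_cons => /orP[/eqP rx0|//]; rewrite rx0 x0V in rV.
by rewrite (chordless_cycle_complete x0V Ut cyct (no_chord_chordless noch') sAt rP) in nr.
Qed.

Lemma clique_nbr_complete :
  (forall x r, x \in V -> r \notin V -> [set x; r] \in E -> complete_to r) ->
  forall x r, x \in V -> r \notin V -> adj F x r -> complete_to r.
Proof.
move=> Ecomplete x r xV rV xr; apply: contraT => nr.
have noE : {in V & partial, forall y w, [set y; w] \notin E}.
  by move=> y w yV; rewrite inE => /andP[wV]; apply: contra; apply: Ecomplete.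
have := minimal_triangulation_cross_edges triF noE chordal_drop_partial xV.
by move/(_ r); rewrite inE rV nr xr => /(_ isT).
Qed.

End CliqueNeighbours.

Section Module.
Variables (T : finType) (A : {set T}) (E F : {set {set T}}) (V : {set T}).
Hypotheses (triF : minimal_triangulation A E F) (sVA : V \subset A)
  (Vmodule : {in V & nbh A E V, forall x y, [set x; y] \in E}).

Local Notation N := (nbh A E V).

Lemma nbh_notin y : y \in N -> y \notin V.
Proof. by rewrite inE in_setD => /andP[/andP[]]. Qed.

Lemma nbh_subset y : y \in N -> y \in A.
Proof. by rewrite inE in_setD => /andP[/andP[]]. Qed.

Lemma mem_nbh x y : x \in V -> y \notin V -> [set x; y] \in E -> y \in N.
Proof.
move=> xV yV xyE; have [wfF sEF _ _] := triF.
have /andP[_ yA] : (x \in A) && (y \in A).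
  by rewrite -!sub1set -subUset; case: (wfF _ (subsetP sEF _ xyE)).
rewrite inE in_setD yV yA /=; apply/exists_inP; exists x => //.
by rewrite /adj /= xyE andbT; apply: contraNneq yV => <-.
Qed.

Lemma adj_module_nbh x y : x \in V -> y \in N -> adj F x y.
Proof.
move=> xV yN; have [_ sEF _ _] := triF.
rewrite /adj /= (subsetP sEF _ (Vmodule xV yN)) andbT.
by apply: contraNneq (nbh_notin yN) => <-.
Qed.

Lemma module_not_clique Om : maximal_clique A F Om ->
  Om :&: V != set0 -> ~~ (V \subset Om) -> ~ is_clique A F V.
Proof.
move=> [[sOmA Omcl] Ommax] /set0Pn[u /setIP[uOm uV]] /subsetPn[v vV vOm] Vcl.
have complete r : r \notin V -> adj F u r -> complete_to F V r.
  apply: (clique_nbr_complete triF Vcl _ uV) => x w xV wV xwE.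
  by apply/forall_inP => z zV; apply: adj_module_nbh zV (mem_nbh xV wV xwE).
have vOm_clique : is_clique A F (v |: Om).
  split; first by rewrite subUset sub1set (subsetP sVA) // sOmA.
  suff vy y : y \in Om -> y != v -> [set v; y] \in F.
    move=> x y; rewrite !in_setU1 => /orP[/eqP->|xO] /orP[/eqP->|yO] xy.
    - by rewrite eqxx in xy.
    - by apply: vy; rewrite // eq_sym.
    - by rewrite setUC; apply: vy.
    - exact: Omcl.
  move=> yO yv; have [yV|yV] := boolP (y \in V); first by apply: Vcl.2; rewrite // eq_sym.
  have uy : u != y by apply: contraNneq yV => <-.
  have uy_adj : adj F u y by rewrite /adj /= uy Omcl.
  by case/andP: (complete_toP (complete y yV uy_adj) vV).
by move: vOm; rewrite -(Ommax _ vOm_clique (subsetUr _ _)) setU11.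
Qed.

Section NotClique.
Hypothesis Vnc : ~ is_clique A F V.

Lemma not_clique_pair :
  exists u1 u2, [/\ u1 \in V, u2 \in V, u1 != u2 & ~~ adj F u1 u2].
Proof.
apply: NNPP => nopair; apply: Vnc; split=> // x y xV yV xy.
by apply/negPn/negP => nxy; apply: nopair; exists x, y; rewrite /adj /= xy (negbTE nxy).
Qed.

Lemma nbh_clique n1 n2 : n1 \in N -> n2 \in N -> n1 != n2 -> adj F n1 n2.
Proof.
move=> n1N n2N n12; have [u1 [u2 [u1V u2V u12 nu12]]] := not_clique_pair.
have [_ _ chF _] := triF.
have neq x y : x \in V -> y \in N -> x != y by move=> xV yN; apply: contraNneq (nbh_notin yN) => <-.
apply: (chordal_square chF _ _ _ nu12).
- rewrite /= !inE !negb_or u12 n12 (neq u1) // (neq u1) // (neq u2) //.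
  by rewrite eq_sym (neq u2).
- by move=> z; rewrite !inE => /or4P[]/eqP->; by [apply: (subsetP sVA)|apply: nbh_subset].
- by rewrite /= [adj F n1 u2]adjC [adj F n2 u1]adjC !adj_module_nbh.
Qed.

Lemma module_edge_nbh x y : x \in V -> y \notin V -> adj F x y -> y \in N.
Proof.
move=> xV yV xy; apply: contraT => yN.
pose R := ~: (V :|: N); pose G := F :\: cross_edges F V R.
have noE : {in V & R, forall a r, [set a; r] \notin E}.
  move=> a r aV; rewrite in_setC in_setU negb_or => /andP[rV rN].
  exact: contra (mem_nbh aV rV) rN.
have [_ _ chF _] := triF.
have chG : chordal A G.
  apply: (chordal_glue (V := V) (N := N)).
  - move=> a b aV; rewrite inE => bV.
    by rewrite adj_cross_edges !in_setC !in_setU aV (negbTE bV) /= orbF negbK => /andP[].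
  - move=> a b aV bN; rewrite adj_cross_edges adj_module_nbh //.
    by rewrite !in_setC !in_setU aV bN (negbTE (nbh_notin bN)).
  - move=> a b aN bN ab; rewrite adj_cross_edges nbh_clique //.
    by rewrite (negbTE (nbh_notin aN)) (negbTE (nbh_notin bN)).
  - apply: chordal_on_subgraph chF (subsetDl _ _) _ => a b aV bV ab.
    by rewrite adj_cross_edges ab !in_setC !in_setU aV bV.
  - apply: chordal_on_subgraph chF (subsetDl _ _) _ => a b aV bV ab.
    by rewrite adj_cross_edges ab; rewrite !inE in aV bV; rewrite (negbTE aV) (negbTE bV).
have := minimal_triangulation_cross_edges triF noE chG xV.
by move/(_ y); rewrite in_setC in_setU (negbTE yV) (negbTE yN) xy => /(_ isT).
Qed.

End NotClique.

Section MaximalClique.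
Variable Om : {set T}.
Hypotheses (maxOm : maximal_clique A F Om) (OmV : Om :&: V != set0) (VOm : ~~ (V \subset Om)).

Let Vnc := module_not_clique maxOm OmV VOm.

Lemma clique_setU_nbh K : is_clique A F K -> K \subset V :|: N -> is_clique A F (K :|: N).
Proof.
move=> [sKA Kcl] sKVN; split.
  by rewrite subUset sKA; apply/subsetP => y /nbh_subset.
have KN x y : x \in K -> y \in N -> x != y -> [set x; y] \in F.
  move=> xK yN xy; move: (subsetP sKVN _ xK); rewrite in_setU => /orP[xV|xN].
    by case/andP: (adj_module_nbh xV yN).
  by case/andP: (nbh_clique Vnc xN yN xy).
move=> x y; rewrite !in_setU => /orP[xK|xN] /orP[yK|yN] xy.
- exact: Kcl.
- exact: KN.
- by rewrite setUC; apply: KN; rewrite // eq_sym.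
- by case/andP: (nbh_clique Vnc xN yN xy).
Qed.

Lemma setD_module_nbh : Om :\: V = N.
Proof.
have [[sOmA Omcl] Ommax] := maxOm; have /set0Pn[u /setIP[uOm uV]] := OmV.
have OmVN : Om :\: V \subset N.
  apply/subsetP => w; rewrite in_setD => /andP[wV wOm]; apply: (module_edge_nbh Vnc uV wV).
  have uw : u != w by apply: contraNneq wV => <-.
  by rewrite /adj /= uw Omcl.
have sOmVN : Om \subset V :|: N.
  apply/subsetP => w wOm; rewrite in_setU; case: (boolP (w \in V)) => //= wV.
  by apply: (subsetP OmVN); rewrite in_setD wV.
have NOm : N \subset Om.
  by rewrite -(Ommax _ (clique_setU_nbh maxOm.1 sOmVN) (subsetUl _ _)) subsetUr.
apply/eqP; rewrite eqEsubset OmVN; apply/subsetP => y yN.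
by rewrite in_setD nbh_notin // (subsetP NOm).
Qed.

Variable EV : {set {set T}}.
Hypotheses (wfEV : wf_graph V EV) (sEVE : EV \subset E)
  (EVinduced : forall e, e \in E -> e \subset V -> e \in EV).

Let FV := [set e in F | e \subset V].

Lemma adj_restrict a b : adj FV a b = [&& adj F a b, a \in V & b \in V].
Proof. by rewrite /adj /= inE -!andbA subUset !sub1set. Qed.

Lemma minimal_triangulation_restrict : minimal_triangulation V EV FV.
Proof.
have [wfF sEF chF minF] := triF.
have sFVF : FV \subset F by apply/subsetP => e; rewrite inE => /andP[].
split.
- by move=> e; rewrite inE => /andP[/wfF[]].
- apply/subsetP => e eEV; rewrite inE (subsetP sEF) ?(subsetP sEVE) //.
  by case: (wfEV eEV).
- have chV : chordal_on A FV (mem V).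
    by apply: chordal_on_subgraph chF sFVF _ => a b aV bV ab; rewrite adj_restrict ab aV bV.
  by move=> s Us sz sV cyc; apply: chV => // z /sV; apply: (subsetP sVA).
move=> F2 sEVF2 sF2FV chF2.
pose G := (F :\: FV) :|: F2.
have F2V e : e \in F2 -> e \subset V by move/(subsetP sF2FV); rewrite inE => /andP[].
have adjG_in a b : a \in V -> b \in V -> adj G a b = adj F2 a b.
  move=> aV bV; rewrite /adj /= in_setU in_setD inE subUset !sub1set aV bV andbT.
  by case: ([set a; b] \in F).
have adjG_out a b : ~~ ((a \in V) && (b \in V)) -> adj G a b = adj F a b.
  move=> nab; rewrite /adj /= in_setU in_setD inE subUset !sub1set (negbTE nab) andbF /=.
  case e2: ([set a; b] \in F2); last by rewrite orbF.
  by move: (F2V _ e2); rewrite subUset !sub1set (negbTE nab).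
have GF : G \subset F by rewrite subUset subsetDl (subset_trans sF2FV sFVF).
have EG : E \subset G.
  apply/subsetP => e eE; rewrite in_setU in_setD inE (subsetP sEF _ eE) andbT /=.
  by case: (boolP (e \subset V)) => //= eV; rewrite (subsetP sEVF2) // EVinduced.
have chG : chordal A G.
  apply: (chordal_glue (V := V) (N := N)).
  - move=> a b aV; rewrite inE => bV; rewrite adjG_out ?(negbTE bV) ?andbF //.
    exact: (module_edge_nbh Vnc aV bV).
  - move=> a b aV bN; rewrite adjG_out ?(negbTE (nbh_notin bN)) ?andbF //.
    exact: adj_module_nbh.
  - move=> a b aN bN ab; rewrite adjG_out ?(negbTE (nbh_notin bN)) ?andbF //.
    exact: (nbh_clique Vnc aN bN ab).
  - move=> s Us sz sA cyc sV.
    have cyc2 : cycle (adj F2) s.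
      by apply: (sub_in_cycle (P := mem V)) cyc => [a b aV bV|]; [rewrite adjG_in | apply/allP].
    have [x [y [xs ys xy nx ny]]] := chF2 s Us sz sV cyc2.
    by exists x, y; rewrite adjG_in ?sV.
  - apply: chordal_on_subgraph chF GF _ => a b aV bV ab.
    by rewrite adjG_out // negb_and; rewrite inE in aV; rewrite aV.
have GeF : G = F := minF G EG GF chG.
apply/eqP; rewrite eqEsubset sF2FV /=; apply/subsetP => e eFV.
have : e \in G by rewrite GeF (subsetP sFVF).
by rewrite in_setU in_setD eFV.
Qed.

Lemma maximal_clique_restrict : maximal_clique V FV (Om :&: V).
Proof.
have [[sOmA Omcl] Ommax] := maxOm.
split.
  split=> [|x y]; first exact: subsetIr.
  rewrite !inE => /andP[xO xV] /andP[yO yV] xy.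
  by rewrite Omcl // subUset !sub1set xV yV.
move=> K [sKV Kcl] sOK.
have KF : is_clique A F K.
  split=> [|x y xK yK xy]; first exact: subset_trans sKV sVA.
  by move: (Kcl _ _ xK yK xy); rewrite inE => /andP[].
have sOKN : Om \subset K :|: N.
  apply/subsetP => w wO; rewrite in_setU; case: (boolP (w \in V)) => wV.
    by rewrite (subsetP sOK) // inE wO wV.
  by rewrite -setD_module_nbh in_setD wV wO orbT.
have KNeOm := Ommax _ (clique_setU_nbh KF (subset_trans sKV (subsetUl _ _))) sOKN.
apply/eqP; rewrite eqEsubset sOK andbT; apply/subsetP => x xK.
by rewrite inE -KNeOm in_setU xK (subsetP sKV).
Qed.

End MaximalClique.

End Module.

Theorem potential_maximal_clique_module (T : finType) (A V : {set T})
  (E EV : {set {set T}}) (Om : {set T}) :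
  V \subset A -> {in V & nbh A E V, forall x y, [set x; y] \in E} ->
  wf_graph V EV -> EV \subset E -> (forall e, e \in E -> e \subset V -> e \in EV) ->
  potential_maximal_clique A E Om -> Om :&: V != set0 -> ~~ (V \subset Om) ->
  potential_maximal_clique V EV (Om :&: V) /\ Om :\: V = nbh A E V.
Proof.
move=> sVA Vmod wfEV sEVE EVind [F [triF maxOm]] OmV VOm.
split; last exact: (setD_module_nbh triF sVA Vmod maxOm OmV VOm).
exists [set e in F | e \subset V]; split.
  exact: (minimal_triangulation_restrict triF sVA Vmod maxOm OmV VOm wfEV sEVE EVind).
exact: (maximal_clique_restrict triF sVA Vmod maxOm OmV VOm).
Qed.

Section Expansion.
Variables (k : nat) (T : finType) (EG : {set {set 'I_k}}).
Variables (V : 'I_k -> {set T}) (EM : 'I_k -> {set {set T}}).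
Hypotheses (hG : wf_graph [set: 'I_k] EG) (hM : forall i, wf_graph (V i) (EM i))
  (hdisj : forall i j, i != j -> [disjoint V i & V j]).

Local Notation H := (expansion_edges EG V EM).

Lemma expansion_part_inj i j x : x \in V i -> x \in V j -> i = j.
Proof.
move=> xi xj; apply/eqP; apply: contraT => ij.
by rewrite (disjointFr (hdisj ij) xi) in xj.
Qed.

Lemma subset_expansion_vertices i : V i \subset expansion_vertices V.
Proof. exact: (bigcup_sup i). Qed.

Lemma subset_expansion_edges i : EM i \subset H.
Proof. by apply: subset_trans (subsetUl _ _); apply: (bigcup_sup i). Qed.

Lemma expansion_cross_edge i j x y :
  x \in V i -> y \in V j -> [set i; j] \in EG -> [set x; y] \in H.
Proof.
move=> xi yj ij; rewrite in_setU inE; apply/orP; right.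
by apply/existsP; exists x; apply/existsP; exists y; apply/existsP; exists i;
  apply/existsP; exists j; rewrite eqxx xi yj ij.
Qed.

Lemma expansion_edgesP e : e \in H ->
  (exists i, e \in EM i) \/
  exists a b i j, [/\ e = [set a; b], a \in V i, b \in V j & [set i; j] \in EG].
Proof.
rewrite in_setU => /orP[/bigcupP[i _ ei]|]; first by left; exists i.
rewrite inE => /existsP[a /existsP[b /existsP[i /existsP[j /and4P[/eqP-> ai bj ij]]]]].
by right; exists a, b, i, j.
Qed.

Lemma expansion_module i :
  {in V i & nbh (expansion_vertices V) H (V i), forall x y, [set x; y] \in H}.
Proof.
move=> x y xi; rewrite inE in_setD => /andP[/andP[yi _] /exists_inP[z zi /andP[zy]]].
case/expansion_edgesP => [[j ej] | [a [b [i' [j' [eab ai bj ij]]]]]].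
  have [_ /subsetP sj] := hM ej.
  have zj : z \in V j by apply: sj; rewrite !inE eqxx.
  have yj : y \in V j by apply: sj; rewrite !inE eqxx orbT.
  by move: yi; rewrite (expansion_part_inj zi zj) yj.
have : z \in [set a; b] by rewrite -eab set21.
have : y \in [set a; b] by rewrite -eab set22.
case/set2P=> ey; case/set2P=> ez; rewrite ?ey ?ez ?eqxx // in zy.
- have ij' : i = j' by apply: expansion_part_inj zi _; rewrite ez.
  by rewrite ey; apply: (expansion_cross_edge xi ai); rewrite setUC ij'.
- have ii' : i = i' by apply: expansion_part_inj zi _; rewrite ez.
  by rewrite ey; apply: (expansion_cross_edge xi bj); rewrite ii'.
Qed.

Lemma expansion_edges_inside i e : e \in H -> e \subset V i -> e \in EM i.
Proof.
move=> /expansion_edgesP[[j ej] | [a [b [i' [j' [-> ai bj ij]]]]]] eV.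
  have [e2 /subsetP sj] := hM ej.
  have /card_gt0P[x xe] : 0 < #|e| by rewrite e2.
  by rewrite (expansion_part_inj (subsetP eV _ xe) (sj _ xe)).
have ii' := expansion_part_inj ai (subsetP eV a (set21 a b)).
have jj' := expansion_part_inj bj (subsetP eV b (set22 a b)).
by move: ij; rewrite ii' jj' setUid => /hG[]; rewrite cards1.
Qed.

End Expansion.

Theorem lemma7 (k : nat) (T : finType) (EG : {set {set 'I_k}})
  (V : 'I_k -> {set T}) (EM : 'I_k -> {set {set T}})
  (hG : wf_graph [set: 'I_k] EG)
  (hM : forall i, wf_graph (V i) (EM i))
  (hdisj : forall i j, i != j -> [disjoint V i & V j])
  (Om : {set T}) (i : 'I_k) :
  potential_maximal_clique (expansion_vertices V) (expansion_edges EG V EM) Om ->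
  Om :&: V i != set0 ->
  ~~ (V i \subset Om) ->
  potential_maximal_clique (V i) (EM i) (Om :&: V i) /\
  Om :\: V i = nbh (expansion_vertices V) (expansion_edges EG V EM) (V i).
Proof.
apply: potential_maximal_clique_module.
- exact: subset_expansion_vertices.
- exact: expansion_module.
- exact: hM.
- exact: subset_expansion_edges.
- exact: expansion_edges_inside.
Qed.
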